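(* Let $T\in C_0(\mathbb{R}^N;\mathbb{Z})$ be an integral $0$-chain (a finite integer combination of points of $\mathbb{R}^N$) which is the boundary of an integral Lipschitz $1$-chain. Then $\mathrm{FV}(T)=\mathrm{FV}(2T)/2$.
   Context: An integral Lipschitz $1$-chain in $\mathbb{R}^N$ is a finite formal integer combination of Lipschitz maps $[0,1]\to\mathbb{R}^N$; its mass is $\sum_i|a_i|\,\mathrm{length}(\alpha_i)$. $\mathrm{FV}(T)=\inf\{\mathrm{mass}\,U: U \text{ integral Lipschitz } 1\text{-chain},\ \partial U=T\}$. *)

From mathcomp Require Import all_boot all_order all_algebra.
From mathcomp Require Import all_classical all_reals.
From Stdlib Require List.
Set Implicit Arguments. Unset Strict Implicit. Unset Printing Implicit Defensive.
Import Order.TTheory GRing.Theory Num.Theory.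
Local Open Scope ring_scope.
Local Open Scope classical_set_scope.

Definition enorm {R : realType} {N : nat} (v : 'rV[R]_N) : R :=
  Num.sqrt (\sum_(i < N) v ord0 i ^+ 2).

(* Lipschitz map [0,1] -> R^N (only its values on [0,1] matter). *)
Definition lipschitz01 {R : realType} {N : nat} (g : R -> 'rV[R]_N) : Prop :=
  exists L : R, forall s t : R, 0 <= s <= 1 -> 0 <= t <= 1 ->
    enorm (g s - g t) <= L * `|s - t|.

Definition partition_sum {R : realType} {N : nat} (g : R -> 'rV[R]_N) (s : seq R) : R :=
  \sum_(i < (size s).-1) enorm (g (nth 0 s i.+1) - g (nth 0 s i)).

Definition curve_length {R : realType} {N : nat} (g : R -> 'rV[R]_N) : R :=
  sup [set x : R | exists s : seq R,
        [/\ sorted <=%R s, all (fun t => 0 <= t <= 1) s & x = partition_sum g s]].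

Definition chain1 (R : realType) (N : nat) := seq (int * (R -> 'rV[R]_N)).

Definition lipschitz_chain {R : realType} {N : nat} (U : chain1 R N) : Prop :=
  forall c, List.In c U -> lipschitz01 c.2.

Definition mass {R : realType} {N : nat} (U : chain1 R N) : R :=
  \sum_(c <- U) (`|c.1|%:~R * curve_length c.2).

Definition chain0 (R : realType) (N : nat) := 'rV[R]_N -> int.

Definition is_chain0 {R : realType} {N : nat} (T : chain0 R N) : Prop :=
  finite_set [set x | T x != 0].

Definition bdry {R : realType} {N : nat} (U : chain1 R N) : chain0 R N :=
  fun x => \sum_(c <- U) c.1 * ((x == c.2 1)%:R - (x == c.2 0)%:R).

Definition FV {R : realType} {N : nat} (T : chain0 R N) : R :=
  inf [set m : R | exists U : chain1 R N,
        [/\ lipschitz_chain U, bdry U = T & m = mass U]].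

Definition scale0 {R : realType} {N : nat} (k : int) (T : chain0 R N) : chain0 R N :=
  fun x => k * T x.

From mathcomp Require Import all_boot all_order all_algebra.
From mathcomp Require Import all_classical all_reals.
From mathcomp Require Import zify ring lra.
From Stdlib Require List.
Import Order.TTheory GRing.Theory Num.Theory.
Set Implicit Arguments. Unset Strict Implicit. Unset Printing Implicit Defensive.
Local Open Scope ring_scope.
Local Open Scope classical_set_scope.

(* Replace a filling V of 2T by the multigraph of its chords: a curve with
   coefficient a contributes |a| copies of the straight edge between its
   endpoints, oriented by the sign of a; this does not increase the mass.  The
   net flow of this multigraph is 2T, hence even at every vertex, and such a
   multigraph splits into two halves of equal net flow, necessarily T (induct on
   the number of edges: a non-loop edge at v leaves odd flow at v in the rest,
   so another edge meets v, and the two can be merged into one).  The cheaper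
   half, realised by segments, fills T with at most half the mass of V, while
   doubling a filling of T fills 2T; so FV(2T) = 2 FV(T). *)

Section Netflow.
Variable P : eqType.
Implicit Types (e : P * P) (E A B : seq (P * P)).

Definition netflow E (x : P) : int :=
  \sum_(e <- E) ((x == e.2)%:R - (x == e.1)%:R).

Definition balanced_split E := exists A B,
  perm_eq E (A ++ B) /\ netflow A =1 netflow B.

Definition even_netflow E := forall x, exists k : int, netflow E x = 2 * k.

Lemma netflow1 e x : netflow [:: e] x = (x == e.2)%:R - (x == e.1)%:R.
Proof. by rewrite /netflow big_seq1. Qed.

Lemma netflow_cons e E x : netflow (e :: E) x = netflow [:: e] x + netflow E x.
Proof. by rewrite /netflow big_cons big_seq1. Qed.

Lemma netflow_cat A B x : netflow (A ++ B) x = netflow A x + netflow B x.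
Proof. exact: big_cat. Qed.

Lemma netflow_perm A B : perm_eq A B -> netflow A =1 netflow B.
Proof. by move=> pAB x; apply: perm_big. Qed.

Lemma balanced_split_perm E E' : perm_eq E E' -> balanced_split E' -> balanced_split E.
Proof. by move=> pE [A [B [pAB eAB]]]; exists A, B; split => //; apply: perm_trans pE pAB. Qed.

Lemma balanced_split_consP e E : balanced_split (e :: E) ->
  exists A B, perm_eq E (A ++ B) /\ netflow (e :: A) =1 netflow B.
Proof.
move=> [A [B [pAB eAB]]].
wlog eA : A B pAB eAB / e \in A => [wlog|].
  have : e \in A ++ B by rewrite -(perm_mem pAB) mem_head.
  rewrite mem_cat => /orP[eA | eB]; first exact: (wlog A B).
  by apply: (wlog B A) => //; rewrite perm_sym perm_catC perm_sym.
have pA := perm_to_rem eA.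
exists (rem e A), B; split; last by move=> x; rewrite -eAB (netflow_perm pA).
by rewrite -(perm_cons e); apply: perm_trans pAB _; rewrite -cat_cons perm_cat2r.
Qed.

Lemma balanced_split_concat e1 e2 e E :
  netflow [:: e1; e2] =1 netflow [:: e] ->
  balanced_split (e :: E) -> balanced_split (e1 :: e2 :: E).
Proof.
move=> he /balanced_split_consP[A [B [pE eAB]]].
exists [:: e1, e2 & A], B; split; first by rewrite !perm_cons.
by move=> x; rewrite -eAB -[e1 :: _]/([:: e1; e2] ++ A) netflow_cat he -netflow_cons.
Qed.

Lemma balanced_split_fork e1 e2 e E :
  (forall x, netflow [:: e1] x = netflow [:: e2] x + netflow [:: e] x) ->
  balanced_split (e :: E) -> balanced_split (e1 :: e2 :: E).
Proof.
move=> he /balanced_split_consP[A [B [pE eAB]]].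
exists (e1 :: A), (e2 :: B); split.
  by rewrite /= perm_cons perm_sym -cat1s perm_catCA /= perm_cons perm_sym.
by move=> x; rewrite netflow_cons he -addrA -netflow_cons eAB [RHS]netflow_cons.
Qed.

Lemma even_netflow_split E : even_netflow E -> balanced_split E.
Proof.
move: {2}(size E) (leqnn (size E)) => n; elim: n E => [|n IH] [|[v y] E] //=;
  try by move=> _ _; exists [::], [::].
move=> hs hE.
have [vy | nvy] := eqVneq v y.
  subst y; have loop0 x : netflow [:: (v, v)] x = 0 by rewrite netflow1 subrr.
  have [|A [B [pAB eAB]]] := IH E hs.
    by move=> x; have [k hk] := hE x; exists k; rewrite -hk netflow_cons loop0 add0r.
  exists ((v, v) :: A), B; split; first by rewrite /= perm_cons.
  by move=> x; rewrite netflow_cons loop0 add0r eAB.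
have flow_v_nonzero : netflow E v != 0.
  have [k] := hE v; rewrite netflow_cons netflow1 /= eqxx (negbTE nvy).
  move=> hk; apply/eqP => h0; move: hk; rewrite h0; lia.
have /hasP[[w z] ein /= hvwz] : has (fun e => (v == e.1) || (v == e.2)) E.
  apply: contraNT flow_v_nonzero => /hasPn hn; rewrite /netflow big_seq big1 // => e /hn.
  by case/norP => /negbTE-> /negbTE->; rewrite subrr.
have pE := perm_to_rem ein.
apply: (balanced_split_perm (E' := [:: (v, y), (w, z) & rem (w, z) E])).
  by rewrite perm_cons.
have hsize : (size (rem (w, z) E) < n)%N by move: hs; rewrite (perm_size pE).
have flowE x : netflow ((v, y) :: E) x =
    netflow [:: (v, y)] x + netflow [:: (w, z)] x + netflow (rem (w, z) E) x.
  by rewrite [LHS]netflow_cons (netflow_perm pE) [in LHS](netflow_cons (w, z)) addrA.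
have [/eqP vz | nvz] := boolP (v == z).
- subst z; apply: (@balanced_split_concat _ _ (w, y)).
    by move=> x; rewrite netflow_cons !netflow1 /=; ring.
  apply: IH => // x; have [k hk] := hE x; exists k.
  by rewrite -hk flowE netflow_cons !netflow1 /=; ring.
- move: hvwz; rewrite (negbTE nvz) orbF => /eqP vw; subst w.
  apply: (@balanced_split_fork _ _ (z, y)); first by move=> x; rewrite !netflow1 /=; ring.
  apply: IH => // x; have [k hk] := hE x.
  exists (k - ((x == z)%:R - (x == v)%:R)).
  by rewrite flowE !netflow1 /= in hk; rewrite netflow_cons netflow1 /= mulrBr -hk; ring.
Qed.

End Netflow.

Section Curves.
Variables (R : realType) (N : nat).
Implicit Types (g : R -> 'rV[R]_N) (v p q : 'rV[R]_N).

Lemma enorm_ge0 v : 0 <= enorm v.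
Proof. exact: sqrtr_ge0. Qed.

Lemma enormZ (k : R) v : enorm (k *: v) = `|k| * enorm v.
Proof.
rewrite /enorm (eq_bigr (fun i => k ^+ 2 * v ord0 i ^+ 2)); last first.
  by move=> i _; rewrite mxE exprMn.
by rewrite -mulr_sumr sqrtrM ?sqr_ge0 // sqrtr_sqr.
Qed.

Lemma enormN v : enorm (- v) = enorm v.
Proof. by rewrite -scaleN1r enormZ normrN normr1 mul1r. Qed.

Definition partition_sums g := [set x : R | exists s : seq R,
  [/\ sorted <=%R s, all (fun t => 0 <= t <= 1) s & x = partition_sum g s]].

Section IncrementBound.
Variables (g : R -> 'rV[R]_N) (c : R).
Hypothesis g_incr : forall a b, 0 <= a <= 1 -> 0 <= b <= 1 -> a <= b ->
  enorm (g b - g a) <= c * (b - a).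

Lemma partition_sum_le_span x s : sorted <=%R (x :: s) ->
  all (fun t => 0 <= t <= 1) (x :: s) ->
  partition_sum g (x :: s) <= c * (last x s - x).
Proof.
elim: s x => [|y s IH] x; first by rewrite /partition_sum big_ord0 subrr mulr0.
move=> /= /andP[xy sy] /and3P[x01 y01 s01].
rewrite /partition_sum big_ord_recl /=.
have := IH y; rewrite /= sy y01 s01 => /(_ isT isT).
rewrite /partition_sum /= => hs.
by apply: le_trans (lerD (g_incr x01 y01 xy) hs) _; lra.
Qed.

Lemma partition_sum_le s : 0 <= c -> sorted <=%R s ->
  all (fun t => 0 <= t <= 1) s -> partition_sum g s <= c.
Proof.
case: s => [|x s] c0 ss s01; first by rewrite /partition_sum big_ord0.
apply: le_trans (partition_sum_le_span ss s01) _.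
have /andP[l0 l1] : 0 <= last x s <= 1 by apply: (allP s01); exact: mem_last.
move: s01 => /= /andP[/andP[x0 x1] _].
by rewrite -[leRHS]mulr1; apply: ler_wpM2l => //; lra.
Qed.

End IncrementBound.

Lemma partition_sums_ubound g : lipschitz01 g -> has_ubound (partition_sums g).
Proof.
move=> [L hL]; exists `|L| => x [s [ss s01 ->]].
apply: partition_sum_le ss s01 => // a b a01 b01 ab.
apply: le_trans (hL _ _ b01 a01) _.
by rewrite ger0_norm ?subr_ge0 // ler_wpM2r ?subr_ge0 ?ler_norm.
Qed.

Lemma curve_length_ge0 g : lipschitz01 g -> 0 <= curve_length g.
Proof.
move=> /partition_sums_ubound ub; apply: (ub_le_sup ub).
by exists [::]; split => //; rewrite /partition_sum big_ord0.
Qed.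

Lemma chord_le_curve_length g : lipschitz01 g -> enorm (g 1 - g 0) <= curve_length g.
Proof.
move=> /partition_sums_ubound ub; apply: (ub_le_sup ub).
exists [:: 0; 1]; split; rewrite /= ?ler01 ?lexx //.
by rewrite /partition_sum big_ord1.
Qed.

Definition segment p q : R -> 'rV[R]_N := fun t => p + t *: (q - p).

Lemma segment0 p q : segment p q 0 = p.
Proof. by rewrite /segment scale0r addr0. Qed.

Lemma segment1 p q : segment p q 1 = q.
Proof. by rewrite /segment scale1r addrC subrK. Qed.

Lemma segmentB p q a b : segment p q b - segment p q a = (b - a) *: (q - p).
Proof. by rewrite /segment scalerBl opprD addrACA subrr add0r. Qed.

Lemma lipschitz01_segment p q : lipschitz01 (segment p q).
Proof. by exists (enorm (q - p)) => s t _ _; rewrite segmentB enormZ mulrC. Qed.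

Lemma curve_length_segment p q : curve_length (segment p q) <= enorm (q - p).
Proof.
apply: ge_sup; first by exists 0, [::]; split => //; rewrite /partition_sum big_ord0.
move=> x [s [ss s01 ->]]; apply: partition_sum_le ss s01 => [a b _ _ ab|].
  by rewrite segmentB enormZ ger0_norm ?subr_ge0 // mulrC.
exact: enorm_ge0.
Qed.

End Curves.

Lemma sumr_nseq (I : Type) (V : nmodType) (F : I -> V) n a :
  \sum_(i <- nseq n a) F i = F a *+ n.
Proof. by elim: n => [|n IH]; rewrite ?big_nil // big_cons IH mulrS. Qed.

Section Chains.
Variables (R : realType) (N : nat).
Local Notation point := 'rV[R]_N.

Lemma lipschitz_chain_map (I : Type) (f : I -> int * (R -> point)) (s : seq I) :
  (forall i, List.In i s -> lipschitz01 (f i).2) -> lipschitz_chain (map f s).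
Proof.
elim: s => [|i s IH] hf c //= [<- | hc]; first by apply: hf; left.
by apply: IH hc => j hj; apply: hf; right.
Qed.

Lemma lipschitz_chain_cons c (U : chain1 R N) :
  lipschitz_chain (c :: U) -> lipschitz01 c.2 /\ lipschitz_chain U.
Proof. by move=> hU; split => [|d hd]; apply: hU; [left | right]. Qed.

Lemma mass_ge0 (U : chain1 R N) : lipschitz_chain U -> 0 <= mass U.
Proof.
elim: U => [|c U IH]; first by rewrite /mass big_nil.
move=> /lipschitz_chain_cons[hc hU]; rewrite /mass big_cons addr_ge0 ?IH //.
by rewrite mulr_ge0 ?ler0z ?curve_length_ge0.
Qed.

Lemma double_chain (U : chain1 R N) :
  let U2 := [seq (2 * c.1, c.2) | c <- U] in
  lipschitz_chain U ->
  [/\ lipschitz_chain U2, bdry U2 = scale0 2 (bdry U) & mass U2 = 2 * mass U].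
Proof.
move=> U2 hU; split.
- by apply: lipschitz_chain_map => c /hU.
- apply: funext => x; rewrite /bdry /scale0 big_map mulr_sumr.
  by apply: eq_bigr => c _; rewrite mulrA.
- rewrite /mass big_map mulr_sumr; apply: eq_bigr => c _ /=.
  by rewrite normrM intrM mulrA.
Qed.

Definition chord_edge (c : int * (R -> point)) : point * point :=
  if 0 <= c.1 then (c.2 0, c.2 1) else (c.2 1, c.2 0).

Definition chord_edges (U : chain1 R N) : seq (point * point) :=
  flatten [seq nseq `|c.1|%N (chord_edge c) | c <- U].

Definition edge_length (E : seq (point * point)) : R :=
  \sum_(e <- E) enorm (e.2 - e.1).

Lemma netflow_chord_edges (U : chain1 R N) : netflow (chord_edges U) =1 bdry U.
Proof.
move=> x; rewrite /netflow /chord_edges big_flatten /= big_map /bdry.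
apply: eq_bigr => c _; rewrite sumr_nseq mulr_absz mulrzz mulrC /chord_edge.
case: ifP => [c0 | /negbT]; first by rewrite ger0_norm.
by rewrite -ltNge => /ltr0_norm->; ring.
Qed.

Lemma edge_length_chord_edges (U : chain1 R N) :
  lipschitz_chain U -> edge_length (chord_edges U) <= mass U.
Proof.
rewrite /edge_length /chord_edges big_flatten /= big_map /mass => hU.
elim: U hU => [|c U IH]; rewrite ?big_nil // => /lipschitz_chain_cons[hc hU].
rewrite !big_cons lerD ?IH // sumr_nseq -mulr_natl natr_absz ler_wpM2l ?ler0z //.
apply: le_trans (chord_le_curve_length hc); rewrite /chord_edge.
by case: ifP => //= _; rewrite -enormN opprB.
Qed.

Definition segment_chain (E : seq (point * point)) : chain1 R N :=
  [seq (1%:Z, segment e.1 e.2) | e <- E].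

Lemma lipschitz_segment_chain E : lipschitz_chain (segment_chain E).
Proof. by apply: lipschitz_chain_map => e _; apply: lipschitz01_segment. Qed.

Lemma bdry_segment_chain E : bdry (segment_chain E) = netflow E.
Proof.
apply: funext => x; rewrite /bdry big_map; apply: eq_bigr => e _.
by rewrite /= mul1r segment0 segment1.
Qed.

Lemma mass_segment_chain E : mass (segment_chain E) <= edge_length E.
Proof.
rewrite /mass big_map; apply: ler_sum => e _.
by rewrite normr1 mul1r curve_length_segment.
Qed.

Lemma halve_filling (V : chain1 R N) (T : chain0 R N) :
  lipschitz_chain V -> bdry V = scale0 2 T ->
  exists U, [/\ lipschitz_chain U, bdry U = T & 2 * mass U <= mass V].
Proof.
move=> hV hbV.
have flowV x : netflow (chord_edges V) x = 2 * T x.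
  by rewrite netflow_chord_edges hbV.
have [A [B [pAB eAB]]] : balanced_split (chord_edges V).
  by apply: even_netflow_split => x; exists (T x).
have flowA x : netflow A x = T x.
  move: (flowV x); rewrite (netflow_perm pAB) netflow_cat -eAB.
  by move: (netflow A x) (T x) => a t; lia.
have lenAB : edge_length A + edge_length B = edge_length (chord_edges V).
  by rewrite /edge_length (perm_big _ pAB) big_cat.
pose C := if edge_length A <= edge_length B then A else B.
have flowC x : netflow C x = T x by rewrite /C; case: ifP => _; rewrite -?eAB flowA.
have lenC : 2 * edge_length C <= edge_length (chord_edges V).
  by rewrite -lenAB /C; case: ifP => ?; lra.
exists (segment_chain C); split.
- exact: lipschitz_segment_chain.
- by apply: funext => x; rewrite bdry_segment_chain flowC.
- apply: le_trans (edge_length_chord_edges hV); apply: le_trans lenC.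
  by rewrite ler_wpM2l // mass_segment_chain.
Qed.

Definition filling_masses (T : chain0 R N) := [set m : R | exists U : chain1 R N,
  [/\ lipschitz_chain U, bdry U = T & m = mass U]].

Lemma filling_masses_lbound (T : chain0 R N) : has_lbound (filling_masses T).
Proof. by exists 0 => m [U [hU _ ->]]; exact: mass_ge0. Qed.

Lemma FV_le_mass (T : chain0 R N) (U : chain1 R N) :
  lipschitz_chain U -> bdry U = T -> FV T <= mass U.
Proof. by move=> hU hbU; apply: (ge_inf (filling_masses_lbound T)); exists U. Qed.

Lemma FV_scale2 (T : chain0 R N) :
  (exists U : chain1 R N, lipschitz_chain U /\ bdry U = T) ->
  FV (scale0 2 T) = 2 * FV T.
Proof.
move=> [U0 [hU0 hbU0]].
have [hU2 hbU2 _] := double_chain hU0.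
have ne1 : filling_masses T !=set0 by exists (mass U0), U0.
have ne2 : filling_masses (scale0 2 T) !=set0.
  by eexists; exists [seq (2 * c.1, c.2) | c <- U0]; rewrite hbU2 hbU0.
apply/eqP; rewrite eq_le; apply/andP; split.
- rewrite mulrC -ler_pdivrMr //; apply: (lb_le_inf ne1) => _ [U [hU hbU ->]].
  have [hU2' hbU2' mU2] := double_chain hU.
  rewrite ler_pdivrMr // mulrC -mU2; apply: FV_le_mass => //.
  by rewrite hbU2' hbU.
- apply: (lb_le_inf ne2) => _ [V [hV hbV ->]].
  have [U [hU hbU mU]] := halve_filling hV hbV.
  by apply: le_trans mU; rewrite ler_wpM2l // FV_le_mass.
Qed.

End Chains.

Theorem proposition4p1 (R : realType) (N : nat) (T : chain0 R N) :
  is_chain0 T ->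
  (exists U : chain1 R N, lipschitz_chain U /\ bdry U = T) ->
  FV T = FV (scale0 2 T) / 2.
Proof. by move=> _ /FV_scale2->; rewrite mulrAC divff ?mul1r ?pnatr_eq0. Qed.
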